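(* Let $\mathbf p$ be a critical reproduction law with finite variance $\sigma^2$. Suppose that its tail distribution satisfies $\bar F(x)>0$ for all $x>0$ and $$\lim_{y\to\infty}\limsup_{x\to\infty}\frac{\bar F(xy)}{\bar F(x)}=0.$$ Then $$\mathbb{P}(X^\ast_1>x)\sim\sqrt{2\bar F(x)/\sigma^2}\qquad\text{as }x\to\infty.$$
   Context: $\mathbf p=(p(n))_{n\in\mathbb{N}}$ is a probability measure on the nonnegative integers with $\sum_n np(n)=1$ (criticality), $\mathbf p\ne\delta_1$, and variance $\sigma^2=\sum_n n^2p(n)-1<\infty$. For real $x$, $\bar F(x)=\sum_{n>x}p(n)$. Consider a Galton–Watson process with reproduction law $\mathbf p$ started from one ancestor; $T_1$ is its total population size (ancestor included), $X_1,\dots,X_{T_1}$ are the numbers of children of its individuals (in some arbitrary enumeration), and $X^\ast_1=\max\{X_i:1\le i\le T_1\}$. *)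

From HB Require Import structures.
From mathcomp Require Import all_boot all_order all_algebra.
From mathcomp Require Import all_classical all_reals all_analysis.
Set Implicit Arguments. Unset Strict Implicit. Unset Printing Implicit Defensive.
Import Order.TTheory GRing.Theory Num.Theory.
Local Open Scope classical_set_scope.
Local Open Scope ring_scope.

Inductive ptree := PNode of seq ptree.
HB.instance Definition _ := gen_eqMixin ptree.
HB.instance Definition _ := gen_choiceMixin ptree.

Definition root_deg (t : ptree) : nat := let: PNode ts := t in size ts.

Fixpoint tsize (t : ptree) : nat :=
  let: PNode ts := t in (foldr (fun c acc => tsize c + acc) 0 ts).+1.

Fixpoint maxdeg (t : ptree) : nat :=
  let: PNode ts := t in foldr (fun c acc => maxn (maxdeg c) acc) (size ts) ts.

(* Galton-Watson law of a (finite) plane tree: product over all vertices v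
   of p(k_v), k_v the number of children of v. *)
Fixpoint gw_weight (R : realType) (p : nat -> R) (t : ptree) : R :=
  let: PNode ts := t in p (size ts) * foldr (fun c acc => gw_weight p c * acc) 1 ts.

Definition gw_max_tail (R : realType) (p : nat -> R) (x : R) : R :=
  fine (\esum_(t in [set t : ptree | x < (maxdeg t)%:R]) (gw_weight p t)%:E).

Definition is_prob_nat (R : realType) (p : nat -> R) : Prop :=
  (forall n, 0 <= p n) /\ (\esum_(n in [set: nat]) (p n)%:E = 1)%E.

Definition offspring_mean (R : realType) (p : nat -> R) : \bar R :=
  \esum_(n in [set: nat]) (n%:R * p n)%:E.

Definition offspring_moment2 (R : realType) (p : nat -> R) : \bar R :=
  \esum_(n in [set: nat]) ((n ^ 2)%:R * p n)%:E.

Definition offspring_variance (R : realType) (p : nat -> R) : R := fine (offspring_moment2 p) - 1.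

Definition Fbar (R : realType) (p : nat -> R) (x : R) : R :=
  fine (\esum_(n in [set n : nat | x < n%:R]) (p n)%:E).

From HB Require Import structures.
From mathcomp Require Import all_boot all_order all_algebra.
From mathcomp Require Import all_classical all_reals all_analysis.
From mathcomp Require Import ring lra.
Import Order.TTheory GRing.Theory Num.Theory.
Local Open Scope classical_set_scope.
Import numFieldNormedType.Exports.
Local Open Scope ring_scope.
Set Implicit Arguments. Unset Strict Implicit. Unset Printing Implicit Defensive.

(* Let u = P(X*_1 > x). The trees in which every vertex has at most x children
   have total weight 1 - u, and decomposing at the root shows that 1 - u is a
   fixed point of the truncated generating function s |-> sum_(k <= x) p(k) s^k.
   Subtracting this fixed-point equation from sum p(k) = 1 = sum k p(k) gives
       sum_k p(k) ((1 - u)^k - 1 + k u) = sum_(k > x) p(k) (1 - u)^k.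
   By the Bonferroni inequalities the left side is (sigma^2 / 2) u^2 (1 + o(1))
   as u -> 0, while the right side lies between (1 - x y u) (Fbar(x) - Fbar(x y))
   and Fbar(x). Finite variance gives x^2 Fbar(x) -> 0, hence x u -> 0, and the
   hypothesis on the tail makes Fbar(x y) negligible against Fbar(x) for large y.
   The same identity without truncation (empty right side) shows that the critical
   tree is almost surely finite, which is needed to identify 1 - u. *)

Section esum_facts.
Context (R : realType) (T : choiceType).
Local Open Scope ereal_scope.

Lemma esumZl (I : set T) (a : T -> \bar R) (r : R) :
  (0 <= r)%R -> (forall i, 0 <= a i) ->
  \esum_(i in I) (r%:E * a i) = r%:E * \esum_(i in I) a i.
Proof.
move=> r0 a0; rewrite /esum -ereal_supZl//; last first.
  by apply/set0P; exists 0; exists set0; [exact: fsets_set0|rewrite fsbig_set0].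
congr ereal_sup; apply/seteqP; split=> x /=.
  by move=> [F FI <-]; exists (\sum_(i \in F) a i); [exists F|rewrite ge0_mule_fsumr].
by move=> [y [F FI <-] <-]; exists F => //; rewrite ge0_mule_fsumr.
Qed.

Lemma esum_le_subset (I J : set T) (a : T -> \bar R) :
  I `<=` J -> (forall i, 0 <= a i) -> \esum_(i in I) a i <= \esum_(i in J) a i.
Proof.
move=> IJ a0; rewrite [leLHS]esum_mkcond [leRHS]esum_mkcond; apply: le_esum => i _.
case: ifPn => iI; first by rewrite ifT// inE; apply: IJ; rewrite -inE.
by case: ifP.
Qed.

End esum_facts.

Lemma cvge0_lt (R : realType) (T : Type) (F : set_system T) (f : T -> \bar R) (e : R) :
  f @ F --> 0%E -> (0 < e)%R -> \forall x \near F, (f x < e%:E)%E.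
Proof.
by move=> f0 e_gt0; apply: (f0 [set y | y < e%:E]%E); apply: open_ereal_lt'; rewrite lte_fin.
Qed.

Lemma esum_tail_small (R : realType) (a : nat -> \bar R) : (forall k, 0 <= a k)%E ->
  (\esum_(k in [set: nat]) a k < +oo)%E -> forall e : R, (0 < e)%R ->
  exists N, (\esum_(k in [set k | (N <= k)%N]) a k <= e%:E)%E.
Proof.
move=> a_ge0 a_fin e e_gt0.
have := @nneseries_tail_cvg R a xpredT.
rewrite nneseries_esumT// => /(_ a_fin (fun k _ => a_ge0 k)) /cvge0_lt /(_ e_gt0) [N _ aN].
by exists N; apply/ltW; have := aN N (leqnn N); rewrite /= eseries_cond nneseries_esum.
Qed.

Lemma limf_esup_lt_near (R : realType) (T : choiceType) (X : filteredType T)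
    (F : set_system X) {FF : Filter F} (f : X -> \bar R) (a : \bar R) :
  (limf_esup f F < a)%E -> \forall x \near F, (f x < a)%E.
Proof.
rewrite limf_esupE => /ereal_inf_lt[_ [V FV <-] supV].
apply: filterS FV => x Vx; apply: le_lt_trans supV.
by apply: ereal_sup_ubound; exists x.
Qed.

Section ratio_limit.
Context (R : rcfType).

Lemma sqrt_ratio_bounds (s q u d : R) : 0 < s -> 0 < q -> 0 <= u -> d <= 1 ->
  s * ((1 - d) * u) ^+ 2 <= q -> q * (1 - d) ^+ 2 <= s * u ^+ 2 ->
  1 - d <= u / Num.sqrt (q / s) /\ (1 - d) * (u / Num.sqrt (q / s)) <= 1.
Proof.
move=> s_gt0 q_gt0 u_ge0 d_le1 ub lb; have d'_ge0 : 0 <= 1 - d by rewrite subr_ge0.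
have a_gt0 : 0 < Num.sqrt (q / s) by rewrite sqrtr_gt0 divr_gt0.
have a2 : Num.sqrt (q / s) ^+ 2 = q / s by rewrite sqr_sqrtr// ltW// divr_gt0.
set a := Num.sqrt (q / s) in a_gt0 a2 *.
rewrite ler_pdivlMr// mulrA ler_pdivrMr// mul1r.
split; rewrite -ler_sqr ?nnegrE ?mulr_ge0 ?(ltW a_gt0)// exprMn a2.
- by rewrite mulrA ler_pdivrMr// mulrC [u ^+ 2 * s]mulrC.
- by rewrite ler_pdivlMr// mulrC -exprMn.
Qed.

Lemma cvg_to1_of_bounds (T : Type) (F : set_system T) {FF : Filter F} (f : T -> R) :
  (forall d, 0 < d < 1 -> \forall x \near F, 1 - d <= f x /\ (1 - d) * f x <= 1) ->
  f @ F --> (1 : R).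
Proof.
move=> bounds; apply/cvgrPdist_le => e e_gt0.
pose d := Num.min e 1 / 2.
have d_gt0 : 0 < d by rewrite divr_gt0// lt_min e_gt0 ltr01.
have d_le : d <= 1 / 2 by rewrite ler_pM2r// ge_min lexx orbT.
have d_le_e : 2 * d <= e by rewrite /d mulrC divfK// ge_min lexx.
have d01 : 0 < d < 1 by rewrite d_gt0 (le_lt_trans d_le)// ltr_pdivrMr// mul1r ltr1n.
apply: filterS (bounds d d01) => x [lb ub].
rewrite ler_norml; apply/andP; split; nra.
Qed.

End ratio_limit.

Lemma ptree_ind (P : ptree -> Prop) :
  (forall ts, {in ts, forall t, P t} -> P (PNode ts)) -> forall t, P t.
Proof.
move=> IHnode; fix IH 1 => -[ts]; apply: IHnode.
elim: ts => [|t ts IHts] u; first by rewrite in_nil => h; discriminate h.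
by rewrite inE => /orP[/eqP->|/IHts].
Qed.

Fixpoint all_deg (D : pred nat) (t : ptree) : bool :=
  let: PNode ts := t in D (size ts) && all (all_deg D) ts.

Fixpoint height (t : ptree) : nat :=
  let: PNode ts := t in foldr (fun c acc => maxn (height c).+1 acc) 0 ts.

Lemma height_node ts n :
  (height (PNode ts) < n.+1)%N = all (fun t => height t < n)%N ts.
Proof. by elim: ts => //= t ts IH; rewrite gtn_max IH ltnS. Qed.

Lemma finite_height_bounded (F : set ptree) : finite_set F ->
  exists N, forall t, F t -> (height t < N)%N.
Proof.
move=> fF; exists (\max_(t <- finmap.enum_fset (fset_set F)) (height t).+1)%N => t Ft.
by apply: leq_trans (leq_bigmax_seq _ _ _) => //; rewrite in_fset_set// inE.
Qed.

Lemma all_deg_maxdeg (D : pred nat) : (forall j k, (j <= k)%N -> D k -> D j) ->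
  forall t, all_deg D t = D (maxdeg t).
Proof.
move=> downD; have D_maxn a b : D (maxn a b) = D a && D b.
  apply/idP/andP => [Dab|[Da Db]]; last by case: (leqP a b).
  by split; apply: downD Dab; rewrite ?leq_maxl ?leq_maxr.
elim/ptree_ind => ts IH /=; rewrite (eq_in_all IH).
by elim: ts (size ts) {IH} => [|t ts IHts] b /=; rewrite ?andbT// D_maxn -IHts andbCA.
Qed.

Lemma all_degT t : all_deg predT t.
Proof. by elim/ptree_ind: t => ts IH /=; apply/allP. Qed.

Definition forest_weight (R : realType) (p : nat -> R) (ts : seq ptree) : R :=
  foldr (fun t acc => gw_weight p t * acc) 1 ts.

Definition forests_in (C : set ptree) (k : nat) : set (seq ptree) :=
  [set ts | size ts = k /\ {in ts, forall t, C t}].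

Section gw_sums.
Context (R : realType) (p : nat -> R) (p_ge0 : forall n, (0 <= p n)%R).
Local Open Scope ereal_scope.

Lemma gw_weight_ge0 t : (0 <= gw_weight p t)%R.
Proof.
elim/ptree_ind: t => ts IH /=; rewrite mulr_ge0//.
elim: ts IH => //= t ts IHts IH; rewrite mulr_ge0 ?IH ?mem_head//.
by apply: IHts => u uts; apply: IH; rewrite inE uts orbT.
Qed.

Lemma forest_weight_ge0 ts : (0 <= forest_weight p ts)%R.
Proof. by elim: ts => //= t ts IH; rewrite mulr_ge0// gw_weight_ge0. Qed.

Lemma esum_forests_in C c k : \esum_(t in C) (gw_weight p t)%:E = c%:E ->
  \esum_(ts in forests_in C k) (forest_weight p ts)%:E = (c ^+ k)%:E.
Proof.
move=> esumC; have c_ge0 : (0 <= c)%R.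
  by rewrite -lee_fin -esumC esum_ge0// => t _; rewrite lee_fin gw_weight_ge0.
elim: k => [|k IH].
  rewrite (_ : forests_in C 0 = [set [::]]) ?esum_set1//.
  by apply/seteqP; split => [ts [/size0nil ->]|ts ->].
have -> : forests_in C k.+1 = (fun tf => tf.1 :: tf.2) @` (C `*` forests_in C k).
  apply/seteqP; split => [ts [sz Cts]|_ [[t ts] [/= Ct [sz Cts]] <-]].
    case: ts sz Cts => // t ts [sz] Cts; exists (t, ts) => //; split; first exact/Cts/mem_head.
    by split => // u uts; apply: Cts; rewrite inE uts orbT.
  by split; [rewrite /= sz|move=> u; rewrite inE => /orP[/eqP->|/Cts]].
rewrite esum_image/=; last by move=> [? ?] [? ?] _ _ [-> ->].
rewrite -(@esum_esum _ _ _ C (fun=> forests_in C k)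
  (fun t ts => (gw_weight p t * forest_weight p ts)%:E)); last first.
  by move=> t ts _ _; rewrite lee_fin mulr_ge0 ?gw_weight_ge0 ?forest_weight_ge0.
under eq_esum do under eq_esum do rewrite EFinM.
rewrite (eq_esum (b := fun t => (c ^+ k)%:E * (gw_weight p t)%:E)); last first.
  move=> t _; rewrite esumZl ?gw_weight_ge0 ?IH 1?muleC// => ts.
  by rewrite lee_fin forest_weight_ge0.
rewrite esumZl ?exprn_ge0 ?esumC -?EFinM ?exprS 1?mulrC// => t.
by rewrite lee_fin gw_weight_ge0.
Qed.

Lemma esum_gw_node C c (D : pred nat) : \esum_(t in C) (gw_weight p t)%:E = c%:E ->
  \esum_(t in PNode @` [set ts | D (size ts) /\ {in ts, forall t, C t}])
     (gw_weight p t)%:E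
  = \esum_(k in [set k | D k]) (p k * c ^+ k)%:E.
Proof.
move=> esumC; rewrite esum_image/=; last by move=> ? ? _ _ [].
rewrite (reindex_esum ([set k | D k] `*`` forests_in C) _ snd); last first.
  split.
  - by move=> [k ts] [/= Dk [sz Cts]]; split; rewrite ?sz.
  - move=> [k ts] [k' ts'] /set_mem/= [_ [sz _]] /set_mem/= [_ [sz' _]] /= ts_eq.
    by rewrite -sz -sz' ts_eq.
  - by move=> ts [Dts Cts]; exists (size ts, ts).
rewrite -(@esum_esum _ _ _ [set k | D k] (forests_in C)
  (fun k ts => (p (size ts) * forest_weight p ts)%:E)); last first.
  by move=> k ts _ _; rewrite lee_fin mulr_ge0 ?forest_weight_ge0.
apply: eq_esum => k Dk.
rewrite (@eq_esum _ _ _ _ (fun ts => (p k)%:E * (forest_weight p ts)%:E)); last first.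
  by move=> ts [<- _]; rewrite EFinM.
by rewrite esumZl ?(esum_forests_in _ esumC) -?EFinM// => ts; rewrite lee_fin forest_weight_ge0.
Qed.

End gw_sums.

Section gw_fixpoint.
Context (R : realType) (p : nat -> R) (p_ge0 : forall n, (0 <= p n)%R).
Context (p_sum1 : (\esum_(n in [set: nat]) (p n)%:E = 1)%E).
Context (D : pred nat).
Local Open Scope ereal_scope.

Definition deg_trees := [set t | all_deg D t].

(* A finite family of trees has bounded height, and the weights of the trees of
   height < n are the iterates, started at 0, of the truncated generating function;
   this bounds the total weight of [deg_trees] by 1. *)
Let deg_trees_below n := [set t | all_deg D t /\ (height t < n)%N].

Let deg_trees_belowS n : deg_trees_below n.+1 =
  PNode @` [set ts | D (size ts) /\ {in ts, forall t, deg_trees_below n t}].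
Proof.
apply/seteqP; split => [[ts] [/= /andP[Dts Ats] hts]|_ [ts [Dts Cts] <-]].
  exists ts => //; split => // t tts; split; first exact: (allP Ats).
  by move: hts; rewrite height_node => /allP/(_ _ tts).
split; first by rewrite /= Dts; apply/allP => t /Cts [].
by rewrite height_node; apply/allP => t /Cts [].
Qed.

Lemma deg_trees_node :
  deg_trees = PNode @` [set ts | D (size ts) /\ {in ts, forall t, deg_trees t}].
Proof.
apply/seteqP; split => [[ts] /= /andP[Dts Ats]|_ [ts [Dts Cts] <-]].
  by exists ts => //; split => // t tts; exact: (allP Ats).
by rewrite /deg_trees /= Dts; apply/allP => t /Cts.
Qed.

Lemma truncated_gf_le1 c : (0 <= c <= 1)%R ->
  \esum_(k in [set k | D k]) (p k * c ^+ k)%:E <= 1.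
Proof.
move=> /andP[c_ge0 c_le1]; rewrite -p_sum1.
apply: (@le_trans _ _ (\esum_(k in [set: nat]) (p k * c ^+ k)%:E)).
  by apply: esum_le_subset => // k; rewrite lee_fin mulr_ge0// exprn_ge0.
by apply: le_esum => k _; rewrite lee_fin ler_piMr// exprn_ile1.
Qed.

Let esum_deg_trees_below n : exists2 c, (0 <= c <= 1)%R &
  \esum_(t in deg_trees_below n) (gw_weight p t)%:E = c%:E.
Proof.
elim: n => [|n [c c01 esum_c]].
  exists 0%R; first by rewrite lexx ler01.
  by rewrite (_ : deg_trees_below 0 = set0) ?esum_set0//; apply/seteqP; split => t [].
rewrite deg_trees_belowS (esum_gw_node p_ge0 _ esum_c).
set e := esum _ _.
have e_ge0 : 0 <= e.
  by apply: esum_ge0 => k _; rewrite lee_fin mulr_ge0// exprn_ge0//; case/andP: c01.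
have e_le1 : e <= 1 by apply: truncated_gf_le1.
have e_fin : e \is a fin_num by rewrite ge0_fin_numE// (le_lt_trans e_le1) ?ltry.
by exists (fine e); rewrite ?fineK// fine_ge0//= -lee_fin fineK.
Qed.

Lemma esum_deg_trees_le1 : \esum_(t in deg_trees) (gw_weight p t)%:E <= 1.
Proof.
apply: ge_ereal_sup => _ [F [finF Fdeg] <-].
have [N FN] := finite_height_bounded finF.
have [c /andP[_ c_le1] esum_c] := esum_deg_trees_below N.
apply: (@le_trans _ _ (\esum_(t in deg_trees_below N) (gw_weight p t)%:E)).
  by apply: ereal_sup_ubound; exists F => //; split => // t Ft; split; [exact: Fdeg|exact: FN].
by rewrite esum_c lee_fin.
Qed.

Lemma esum_deg_trees_fixpoint : exists c, [/\ (0 <= c <= 1)%R,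
  \esum_(t in deg_trees) (gw_weight p t)%:E = c%:E &
  c%:E = \esum_(k in [set k | D k]) (p k * c ^+ k)%:E].
Proof.
set e := esum _ _.
have e_ge0 : 0 <= e by apply: esum_ge0 => t _; rewrite lee_fin gw_weight_ge0.
have e_fin : e \is a fin_num.
  by rewrite ge0_fin_numE// (le_lt_trans esum_deg_trees_le1) ?ltry.
exists (fine e); split; rewrite ?fineK//.
  by rewrite fine_ge0//= -lee_fin fineK// esum_deg_trees_le1.
by rewrite /e {1}deg_trees_node (esum_gw_node p_ge0 _ (esym (fineK e_fin))).
Qed.

End gw_fixpoint.

Lemma sqrn_bin2 k : (k ^ 2 = 2 * 'C(k, 2) + k)%N.
Proof. by case: k => // k; rewrite -mul_bin_diag bin1 -mulnSr mulnn. Qed.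

Section taylor_rem.
Context (R : realFieldType).

Definition taylor_rem (k : nat) (u : R) := (1 - u) ^+ k - 1 + k%:R * u.

Lemma taylor_remS (k : nat) (u : R) :
  taylor_rem k.+1 u = taylor_rem k u + u * (1 - (1 - u) ^+ k).
Proof. by rewrite /taylor_rem exprS -natr1; ring. Qed.

Lemma one_sub_pow_bounds (k : nat) (u : R) : 0 <= u <= 1 ->
  k%:R * u - 'C(k, 2)%:R * u ^+ 2 <= 1 - (1 - u) ^+ k <= k%:R * u.
Proof.
move=> /andP[u_ge0 u_le1]; have u'_ge0 : 0 <= 1 - u by rewrite subr_ge0.
elim: k => [|k /andP[lb ub]]; first by rewrite bin0n expr0 subrr !mul0r subrr lexx.
have -> : 1 - (1 - u) ^+ k.+1 = u + (1 - u) * (1 - (1 - u) ^+ k).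
  by rewrite exprS; ring.
have := ler_wpM2l u'_ge0 lb; have := ler_wpM2l u'_ge0 ub.
have : 0 <= 'C(k, 2)%:R * u ^+ 3 by rewrite mulr_ge0 ?exprn_ge0.
have : 0 <= k%:R * u ^+ 2 by rewrite mulr_ge0 ?exprn_ge0.
by rewrite binS bin1 !natrD -natr1 => *; apply/andP; split; lra.
Qed.

Lemma taylor_rem_bounds (k : nat) (u : R) : 0 <= u <= 1 -> [/\ 0 <= taylor_rem k u,
  'C(k, 2)%:R * u ^+ 2 - 'C(k, 3)%:R * u ^+ 3 <= taylor_rem k u &
  taylor_rem k u <= 'C(k, 2)%:R * u ^+ 2].
Proof.
move=> u01; have /andP[u_ge0 _] := u01.
elim: k => [|k [ge0 lb ub]]; first by rewrite /taylor_rem !bin0n !mul0r; split; lra.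
have /andP[lb' ub'] := one_sub_pow_bounds k u01.
rewrite taylor_remS !binS bin1 !natrD; split.
- by rewrite addr_ge0// mulr_ge0// subr_ge0 exprn_ile1//; lra.
- by apply: le_trans (lerD lb (ler_wpM2l u_ge0 lb')); lra.
- by apply: le_trans (lerD ub (ler_wpM2l u_ge0 ub')) _; lra.
Qed.

Lemma taylor_rem_ge (k : nat) (u : R) : 0 <= u <= 1 ->
  'C(k, 2)%:R * u ^+ 2 * (1 - k%:R * u) <= taylor_rem k u.
Proof.
move=> u01; have /andP[u_ge0 _] := u01; have [_ lb _] := taylor_rem_bounds k u01.
have C3_le : ('C(k, 3) <= 'C(k, 2) * k)%N.
  rewrite mulnC (leq_trans (leq_pmull _ (isT : 0 < 3)%N))//.
  by rewrite mul_bin_left leq_mul2r leq_subr orbT.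
apply: le_trans lb; rewrite -subr_ge0.
have -> : 'C(k, 2)%:R * u ^+ 2 - 'C(k, 3)%:R * u ^+ 3 -
    'C(k, 2)%:R * u ^+ 2 * (1 - k%:R * u) = ('C(k, 2)%:R * k%:R - 'C(k, 3)%:R) * u ^+ 3.
  by ring.
by rewrite mulr_ge0 ?exprn_ge0// subr_ge0 -natrM ler_nat.
Qed.

Lemma sqr_le_taylor_rem (k : nat) (u : R) : 0 <= u <= 1 -> (2 <= k)%N ->
  u ^+ 2 <= taylor_rem k u.
Proof.
move=> u01; elim: k => // k IH; rewrite leq_eqVlt => /orP[/eqP[<-]|/IH].
  by rewrite [leRHS](_ : _ = u ^+ 2)// /taylor_rem; ring.
move=> /le_trans; apply; rewrite taylor_remS lerDl.
by have /andP[u_ge0 u_le1] := u01; rewrite mulr_ge0// subr_ge0 exprn_ile1//; lra.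
Qed.

End taylor_rem.

Section critical_gw.
Context (R : realType) (p : nat -> R) (p_ge0 : forall n, (0 <= p n)%R).
Context (p_sum1 : (\esum_(n in [set: nat]) (p n)%:E = 1)%E).
Context (p_mean1 : offspring_mean p = 1%E) (p1_neq1 : p 1%N != 1).
Local Open Scope ereal_scope.

Lemma exists_deg_ge2 : exists2 K, (2 <= K)%N & (0 < p K)%R.
Proof.
apply: contrapT => noK.
have pK0 k : (2 <= k)%N -> p k = 0%R.
  move=> k2; apply/eqP; rewrite eq_le p_ge0 andbT leNgt; apply/negP => pk.
  by apply: noK; exists k.
suff : offspring_mean p = (p 1%N)%:E.
  by rewrite p_mean1 => -[/esym/eqP]; rewrite (negbTE p1_neq1).
rewrite /offspring_mean (esumID [set 1%N]); last by move=> k _; rewrite lee_fin mulr_ge0.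
rewrite setTI esum_set1 ?lee_fin ?mulr_ge0// mul1r esum1 ?adde0// => -[|[|k]] [_ /= k1].
- by rewrite mul0r.
- by case: k1.
- by rewrite pK0 ?mulr0.
Qed.

Lemma esum_taylor_rem_fixpoint (D : pred nat) (u : R) : (0 <= u <= 1)%R ->
  (1 - u)%:E = \esum_(k in [set k | D k]) (p k * (1 - u) ^+ k)%:E ->
  \esum_(k in [set: nat]) (p k * taylor_rem k u)%:E =
  \esum_(k in [set k | ~~ D k]) (p k * (1 - u) ^+ k)%:E.
Proof.
move=> u01 fixD; have /andP[u_ge0 u_le1] := u01.
have pow_ge0 k : 0 <= (p k * (1 - u) ^+ k)%:E.
  by rewrite lee_fin mulr_ge0// exprn_ge0// subr_ge0.
have split_D : \esum_(k in [set: nat]) (p k * (1 - u) ^+ k)%:E =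
    (1 - u)%:E + \esum_(k in [set k | ~~ D k]) (p k * (1 - u) ^+ k)%:E.
  rewrite (esumID [set k | D k])// !setTI fixD; congr (_ + esum _ _).
  by apply/seteqP; split => k /= /negP.
have mean_u : \esum_(k in [set: nat]) ((p k * (1 - u) ^+ k)%:E + u%:E * (k%:R * p k)%:E) =
    \esum_(k in [set: nat]) (p k * (1 - u) ^+ k)%:E + u%:E.
  rewrite esumD//; last by move=> k _; rewrite -EFinM lee_fin !mulr_ge0.
  by rewrite esumZl -?/(offspring_mean p) ?p_mean1 ?mule1// => k; rewrite lee_fin mulr_ge0.
have mass_1 : \esum_(k in [set: nat]) ((p k * (1 - u) ^+ k)%:E + u%:E * (k%:R * p k)%:E) =
    1 + \esum_(k in [set: nat]) (p k * taylor_rem k u)%:E.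
  rewrite -p_sum1 -esumD; last 2 first.
  - by move=> k _; rewrite lee_fin.
  - by move=> k _; have [rem_ge0 _ _] := taylor_rem_bounds k u01; rewrite lee_fin mulr_ge0.
  by apply: eq_esum => k _; rewrite -!EFinM -!EFinD /taylor_rem; congr (_%:E); ring.
have : 1 + \esum_(k in [set: nat]) (p k * taylor_rem k u)%:E =
    1 + \esum_(k in [set k | ~~ D k]) (p k * (1 - u) ^+ k)%:E.
  by rewrite -mass_1 mean_u split_D addeAC -EFinD subrK.
by move/(congr1 (fun z => z - 1)); rewrite !(addeC 1) !addeK.
Qed.

Lemma sqr_le_esum_taylor_rem K (u : R) : (0 <= u <= 1)%R -> (2 <= K)%N ->
  (p K * u ^+ 2)%:E <= \esum_(k in [set: nat]) (p k * taylor_rem k u)%:E.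
Proof.
move=> u01 K2; apply: (@le_trans _ _ (\esum_(k in [set K]) (p k * taylor_rem k u)%:E)).
  have [rem_ge0 _ _] := taylor_rem_bounds K u01.
  by rewrite esum_set1 ?lee_fin ?mulr_ge0// ler_wpM2l// sqr_le_taylor_rem.
apply: esum_le_subset => // k; have [rem_ge0 _ _] := taylor_rem_bounds k u01.
by rewrite lee_fin mulr_ge0.
Qed.

Lemma gw_total_mass : \esum_(t in [set: ptree]) (gw_weight p t)%:E = 1.
Proof.
have [c [c01 esum_c fix_c]] := esum_deg_trees_fixpoint p_ge0 p_sum1 predT.
have u01 : (0 <= 1 - c <= 1)%R by case/andP: c01 => ? ?; apply/andP; split; lra.
have := esum_taylor_rem_fixpoint (D := predT) u01; rewrite opprB addrC subrK => /(_ fix_c).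
rewrite (_ : [set k | ~~ predT k] = set0) ?esum_set0; last by apply/seteqP; split.
move=> rem0; have [K K2 pK] := exists_deg_ge2.
have := sqr_le_esum_taylor_rem u01 K2; rewrite rem0 lee_fin pmulr_rle0// => c_sq.
have -> : [set: ptree] = deg_trees predT by apply/seteqP; split => t //= _; apply: all_degT.
by rewrite esum_c; congr _%:E; apply/esym/eqP; rewrite -subr_eq0 -sqrf_eq0 eq_le c_sq sqr_ge0.
Qed.

Lemma Fbar_esum (x : R) : \esum_(k in [set k | (x < k%:R)%R]) (p k)%:E = (Fbar p x)%:E.
Proof.
rewrite /Fbar fineK// ge0_fin_numE ?esum_ge0// => [|k _]; last by rewrite lee_fin.
apply: (@le_lt_trans _ _ (\esum_(k in [set: nat]) (p k)%:E)); last by rewrite p_sum1 ltry.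
by apply: esum_le_subset => // k; rewrite lee_fin.
Qed.

Lemma esum_Fbar_itv (x z : R) : (x <= z)%R ->
  \esum_(k in [set k | (x < k%:R)%R /\ (k%:R <= z)%R]) (p k)%:E = (Fbar p x - Fbar p z)%:E.
Proof.
move=> xz; have := Fbar_esum x.
rewrite (esumID [set k | (k%:R <= z)%R]); last by move=> k _; rewrite lee_fin.
rewrite (_ : _ `&` ~` _ = [set k | (z < k%:R)%R]) ?Fbar_esum => [Fx|].
  by rewrite EFinB -Fx addeK.
apply/seteqP; split => k /=; first by move=> [_ /negP]; rewrite -ltNge.
by move=> zk; split; [exact: le_lt_trans zk|apply/negP; rewrite -ltNge].
Qed.

Lemma gw_max_tail_complement (x : R) : exists c, [/\ (0 <= c <= 1)%R,
  gw_max_tail p x = (1 - c)%R &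
  c%:E = \esum_(k in [set k | (k%:R <= x)%R]) (p k * c ^+ k)%:E].
Proof.
pose D := fun k : nat => (k%:R <= x)%R.
have [c [c01 esum_c fix_c]] := esum_deg_trees_fixpoint p_ge0 p_sum1 D.
exists c; split => //; rewrite /gw_max_tail.
suff -> : [set t | (x < (maxdeg t)%:R)%R] = ~` deg_trees D.
  have := gw_total_mass; rewrite (esumID (deg_trees D)) => [|t _]; last first.
    by rewrite lee_fin gw_weight_ge0.
  rewrite !setTI esum_c => /(congr1 (fun z => z - c%:E)).
  by rewrite addeC addeK// => ->; rewrite -EFinB.
have downD j k : (j <= k)%N -> D k -> D j by move=> jk; apply: le_trans; rewrite ler_nat.
by apply/seteqP; split => t; rewrite /= /deg_trees /= (all_deg_maxdeg downD) /D ltNge => /negP.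
Qed.

Lemma gw_max_tail_ge0_le1 (x : R) : (0 <= gw_max_tail p x <= 1)%R.
Proof. by have [c [/andP[? ?] -> _]] := gw_max_tail_complement x; apply/andP; split; lra. Qed.

Lemma gw_max_tail_identity (x : R) :
  \esum_(k in [set: nat]) (p k * taylor_rem k (gw_max_tail p x))%:E =
  \esum_(k in [set k | (x < k%:R)%R]) (p k * (1 - gw_max_tail p x) ^+ k)%:E.
Proof.
have [c [_ u_eq fix_c]] := gw_max_tail_complement x.
have fix_u : (1 - gw_max_tail p x)%:E =
    \esum_(k in [set k | (k%:R <= x)%R]) (p k * (1 - gw_max_tail p x) ^+ k)%:E.
  by rewrite u_eq opprB addrC subrK.
rewrite (esum_taylor_rem_fixpoint (gw_max_tail_ge0_le1 x) fix_u).
by congr esum; apply/seteqP; split => k /=; rewrite ltNge.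
Qed.

Lemma tail_esum_le_Fbar (x u : R) : (0 <= u <= 1)%R ->
  \esum_(k in [set k | (x < k%:R)%R]) (p k * (1 - u) ^+ k)%:E <= (Fbar p x)%:E.
Proof.
move=> /andP[u_ge0 u_le1]; rewrite -Fbar_esum; apply: le_esum => k _.
by rewrite lee_fin ler_piMr// exprn_ile1//; lra.
Qed.

Lemma tail_esum_ge (x z u : R) : (0 <= u <= 1)%R -> (x <= z)%R -> (z * u <= 1)%R ->
  ((1 - z * u) * (Fbar p x - Fbar p z))%:E <=
  \esum_(k in [set k | (x < k%:R)%R]) (p k * (1 - u) ^+ k)%:E.
Proof.
move=> u01 xz zu_le1; have /andP[u_ge0 u_le1] := u01.
apply: (@le_trans _ _ (\esum_(k in [set k | (x < k%:R)%R /\ (k%:R <= z)%R])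
                        (p k * (1 - u) ^+ k)%:E)); last first.
  by apply: esum_le_subset => [k []//|k]; rewrite lee_fin mulr_ge0// exprn_ge0// subr_ge0.
rewrite EFinM -esum_Fbar_itv// -esumZl ?subr_ge0//.
apply: le_esum => k /= [_ kz]; rewrite -EFinM lee_fin mulrC ler_wpM2l//.
have /andP[_ bernoulli] := one_sub_pow_bounds k u01.
have : (k%:R * u <= z * u)%R by rewrite ler_wpM2r.
lra.
Qed.

Context (p_m2_fin : offspring_moment2 p < +oo).

Lemma esum_bin2 :
  \esum_(k in [set: nat]) ('C(k, 2)%:R * p k)%:E = (offspring_variance p / 2)%:E.
Proof.
set S := esum _ _.
have S_ge0 : 0 <= S by apply: esum_ge0 => k _; rewrite lee_fin mulr_ge0.
have m2E : offspring_moment2 p = S + (S + 1).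
  rewrite -p_mean1 -!esumD; try by move=> k _; do ?apply: adde_ge0; rewrite lee_fin mulr_ge0.
  by apply: eq_esum => k _; rewrite -!EFinD sqrn_bin2 mul2n -addnn -addnA !natrD !mulrDl.
have S_fin : S \is a fin_num.
  rewrite ge0_fin_numE//; apply: le_lt_trans p_m2_fin.
  by rewrite m2E leeDl// adde_ge0.
rewrite /offspring_variance m2E -(fineK S_fin) -!EFinD /=.
by congr _%:E; field.
Qed.

Lemma esum_taylor_rem_le (u : R) : (0 <= u <= 1)%R ->
  \esum_(k in [set: nat]) (p k * taylor_rem k u)%:E <=
  (u ^+ 2 * (offspring_variance p / 2))%:E.
Proof.
move=> u01; rewrite EFinM -esum_bin2 -esumZl ?sqr_ge0//; last first.
  by move=> k; rewrite lee_fin mulr_ge0.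
apply: le_esum => k _; have [_ _ ub] := taylor_rem_bounds k u01.
rewrite -EFinM lee_fin [leRHS](_ : _ = p k * ('C(k, 2)%:R * u ^+ 2))%R ?ler_wpM2l//.
by ring.
Qed.

Definition bin2_moment_lt (K : nat) : R :=
  fine (\esum_(k in [set k | (k < K)%N]) ('C(k, 2)%:R * p k)%:E).

Lemma esum_bin2_moment_lt K :
  \esum_(k in [set k | (k < K)%N]) ('C(k, 2)%:R * p k)%:E = (bin2_moment_lt K)%:E.
Proof.
rewrite /bin2_moment_lt fineK// ge0_fin_numE ?esum_ge0// => [|k _]; last first.
  by rewrite lee_fin mulr_ge0.
apply: (@le_lt_trans _ _ (\esum_(k in [set: nat]) ('C(k, 2)%:R * p k)%:E)).
  by apply: esum_le_subset => // k; rewrite lee_fin mulr_ge0.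
by rewrite esum_bin2 ltry.
Qed.

Lemma bin2_moment_lt_approx e : (0 < e)%R ->
  exists K, (offspring_variance p / 2 - e <= bin2_moment_lt K)%R.
Proof.
move=> e_gt0; have term_ge0 k : 0 <= ('C(k, 2)%:R * p k)%:E by rewrite lee_fin mulr_ge0.
have := esum_tail_small term_ge0; rewrite esum_bin2 ltry => /(_ isT e e_gt0) [N tailN].
exists N; rewrite lerBlDr -lee_fin -esum_bin2 EFinD.
rewrite (esumID [set k | (k < N)%N])// setTI esum_bin2_moment_lt leeD2l//.
apply: le_trans tailN; apply: esum_le_subset => // k [_ /negP].
by rewrite -leqNgt.
Qed.

Lemma esum_taylor_rem_ge K (u : R) : (0 <= u <= 1)%R -> (K%:R * u <= 1)%R ->
  (bin2_moment_lt K * (u ^+ 2 * (1 - K%:R * u)))%:E <=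
  \esum_(k in [set: nat]) (p k * taylor_rem k u)%:E.
Proof.
move=> u01 Ku_le1; have /andP[u_ge0 _] := u01.
have rem_ge0 k : 0 <= (p k * taylor_rem k u)%:E.
  by have [? _ _] := taylor_rem_bounds k u01; rewrite lee_fin mulr_ge0.
apply: (@le_trans _ _ (\esum_(k in [set k | (k < K)%N]) (p k * taylor_rem k u)%:E));
  last exact: esum_le_subset.
rewrite EFinM -esum_bin2_moment_lt muleC -esumZl ?mulr_ge0 ?sqr_ge0 ?subr_ge0//; last first.
  by move=> k; rewrite lee_fin mulr_ge0.
apply: le_esum => k /= kK; rewrite -EFinM lee_fin.
apply: le_trans (ler_wpM2l (p_ge0 k) (taylor_rem_ge k u01)).
rewrite [leLHS](_ : _ = p k * ('C(k, 2)%:R * u ^+ 2 * (1 - K%:R * u)))%R; last by ring.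
by rewrite !ler_wpM2l ?mulr_ge0 ?sqr_ge0// lerB// ler_wpM2r// ler_nat ltnW.
Qed.

Lemma sqr_Fbar_small e : (0 < e)%R -> \forall x \near +oo%R, (x ^+ 2 * Fbar p x <= e)%R.
Proof.
move=> e_gt0; have term_ge0 k : 0 <= ((k ^ 2)%:R * p k)%:E by rewrite lee_fin mulr_ge0.
have [N tailN] := esum_tail_small term_ge0 p_m2_fin e_gt0.
near=> x; have Nx : (N%:R <= x)%R by near: x; apply: nbhs_pinfty_ge; rewrite num_real.
have x_ge0 : (0 <= x)%R by apply: le_trans Nx.
rewrite -lee_fin EFinM -Fbar_esum -esumZl ?sqr_ge0//; apply: le_trans tailN.
apply: (@le_trans _ _ (\esum_(k in [set k | (x < k%:R)%R]) ((k ^ 2)%:R * p k)%:E)).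
  apply: le_esum => k /= xk; rewrite -EFinM lee_fin ler_wpM2r// natrX.
  by rewrite ler_pXn2r// ?nnegrE// ltW.
apply: esum_le_subset => // k /= xk.
by rewrite -(ler_nat R) ltW// (le_lt_trans Nx).
Unshelve. all: by end_near.
Qed.

Lemma variance_gt0 : (0 < offspring_variance p)%R.
Proof.
have [K K2 pK] := exists_deg_ge2.
suff : (0 < offspring_variance p / 2)%R by rewrite pmulr_lgt0// invr_gt0.
rewrite -lte_fin -esum_bin2.
apply: (@lt_le_trans _ _ ('C(K, 2)%:R * p K)%:E).
  by rewrite lte_fin mulr_gt0// ltr0n bin_gt0.
rewrite -(esum_set1 (t := K) (a := fun k => ('C(k, 2)%:R * p k)%:E)) ?lee_fin ?mulr_ge0//.
by apply: esum_le_subset => // k; rewrite lee_fin mulr_ge0.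
Qed.

Lemma x_gw_max_tail_small c : (0 < c)%R ->
  \forall x \near +oo%R, (x * gw_max_tail p x <= c)%R.
Proof.
move=> c_gt0; have [K K2 pK_gt0] := exists_deg_ge2.
near=> x; have x_ge0 : (0 <= x)%R by near: x; apply: nbhs_pinfty_ge; rewrite num_real.
have /andP[u_ge0 _] := gw_max_tail_ge0_le1 x.
have u2_le_F : (p K * gw_max_tail p x ^+ 2 <= Fbar p x)%R.
  rewrite -lee_fin; apply: le_trans (sqr_le_esum_taylor_rem (gw_max_tail_ge0_le1 x) K2) _.
  by rewrite gw_max_tail_identity tail_esum_le_Fbar// gw_max_tail_ge0_le1.
have x2F_le : (x ^+ 2 * Fbar p x <= p K * c ^+ 2)%R.
  by near: x; apply: sqr_Fbar_small; rewrite mulr_gt0// exprn_gt0.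
rewrite -ler_sqr ?nnegrE ?mulr_ge0 ?(ltW c_gt0)// -(ler_pM2l pK_gt0) (le_trans _ x2F_le)//.
by rewrite exprMn mulrCA ler_wpM2l// sqr_ge0.
Unshelve. all: by end_near.
Qed.

Lemma gw_max_tail_upper d : (0 < d < 1)%R -> \forall x \near +oo%R,
  (offspring_variance p * ((1 - d) * gw_max_tail p x) ^+ 2 <= 2 * Fbar p x)%R.
Proof.
move=> /andP[d_gt0 d_lt1]; set s := offspring_variance p.
have s_gt0 : (0 < s)%R := variance_gt0.
have sd_gt0 : (0 < s * d / 2)%R by rewrite !mulr_gt0.
have [K moment_K] := bin2_moment_lt_approx sd_gt0.
near=> x.
have xu_le : (x * gw_max_tail p x <= d)%R by near: x; exact: x_gw_max_tail_small.
have Kx : (K%:R <= x)%R by near: x; apply: nbhs_pinfty_ge; rewrite num_real.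
set u := gw_max_tail p x in xu_le *; have u01 := gw_max_tail_ge0_le1 x.
have /andP[u_ge0 u_le1] := u01.
have Ku_le : (K%:R * u <= d)%R by apply: le_trans xu_le; rewrite ler_wpM2r.
have rem_le_F : (bin2_moment_lt K * (u ^+ 2 * (1 - K%:R * u)) <= Fbar p x)%R.
  rewrite -lee_fin; apply: le_trans (esum_taylor_rem_ge u01 (le_trans Ku_le (ltW d_lt1))) _.
  by rewrite gw_max_tail_identity tail_esum_le_Fbar.
have lower_terms : ((s / 2 - s * d / 2) * (u ^+ 2 * (1 - d)) <=
    bin2_moment_lt K * (u ^+ 2 * (1 - K%:R * u)))%R.
  apply: ler_pM => //; last by rewrite ler_wpM2l ?sqr_ge0// lerB.
    by rewrite subr_ge0 ler_pM2r// ger_pMr// ltW.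
  by rewrite mulr_ge0 ?sqr_ge0// subr_ge0 ltW.
rewrite [leLHS](_ : _ = 2 * ((s / 2 - s * d / 2) * (u ^+ 2 * (1 - d))))%R; last by field.
by rewrite ler_pM2l// (le_trans lower_terms).
Unshelve. all: by end_near.
Qed.

Context (Fbar_gt0 : forall x : R, (0 < x)%R -> (0 < Fbar p x)%R).
Context (Fbar_regular : (fun y : R =>
  limf_esup (fun x : R => (Fbar p (x * y) / Fbar p x)%:E) (pinfty_nbhs R)) @ +oo%R --> 0).

Lemma Fbar_ratio_small d : (0 < d)%R ->
  exists2 y, (1 <= y)%R & \forall x \near +oo%R, (Fbar p (x * y) <= d * Fbar p x)%R.
Proof.
move=> d_gt0; have [M [_ M_ok]] := cvge0_lt Fbar_regular d_gt0.
pose y := Num.max (M + 1)%R 1%R; exists y; first by rewrite le_max lexx orbT.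
have M_lt_y : (M < y)%R by rewrite lt_max ltrDl ltr01.
have ratio_near := limf_esup_lt_near (M_ok y M_lt_y).
near=> x.
have ratio_lt : (Fbar p (x * y) / Fbar p x)%:E < d%:E by near: x; exact: ratio_near.
have x_gt0 : (0 < x)%R by near: x; apply: nbhs_pinfty_gt; rewrite num_real.
by rewrite -ler_pdivrMr ?Fbar_gt0// ltW// -lte_fin.
Unshelve. all: by end_near.
Qed.

Lemma gw_max_tail_lower d : (0 < d < 1)%R -> \forall x \near +oo%R,
  (2 * Fbar p x * (1 - d) ^+ 2 <= offspring_variance p * gw_max_tail p x ^+ 2)%R.
Proof.
move=> /andP[d_gt0 d_lt1]; have [y y_ge1 ratio_y] := Fbar_ratio_small d_gt0.
have y_gt0 : (0 < y)%R by apply: lt_le_trans y_ge1.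
near=> x.
have xu_le : (x * gw_max_tail p x <= d / y)%R.
  by near: x; apply: x_gw_max_tail_small; rewrite divr_gt0.
have x_ge0 : (0 <= x)%R by near: x; apply: nbhs_pinfty_ge; rewrite num_real.
have Fxy : (Fbar p (x * y) <= d * Fbar p x)%R by near: x; exact: ratio_y.
set u := gw_max_tail p x in xu_le *; have u01 := gw_max_tail_ge0_le1 x.
have xyu_le : (x * y * u <= d)%R by rewrite mulrAC -ler_pdivlMr.
have := tail_esum_ge u01 (ler_peMr x_ge0 y_ge1) (le_trans xyu_le (ltW d_lt1)).
rewrite -gw_max_tail_identity => /le_trans/(_ (esum_taylor_rem_le u01)); rewrite lee_fin.
have F_ge0 : (0 <= Fbar p x)%R.
  by rewrite -lee_fin -Fbar_esum esum_ge0// => k _; rewrite lee_fin.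
move: (Fbar p x) (Fbar p (x * y)) F_ge0 Fxy => F Fy F_ge0 Fxy tail_le.
have d'_ge0 : (0 <= 1 - d)%R by rewrite subr_ge0 ltW.
have : ((1 - d) * ((1 - d) * F) <= (1 - x * y * u) * (F - Fy))%R.
  apply: ler_pM; [done|exact: mulr_ge0|by rewrite lerB|by rewrite mulrBl mul1r lerB].
move/le_trans/(_ tail_le) => F_le.
rewrite [leLHS](_ : _ = 2 * ((1 - d) * ((1 - d) * F)))%R; last by ring.
rewrite [leRHS](_ : _ = 2 * (u ^+ 2 * (offspring_variance p / 2)))%R; last by field.
by rewrite ler_pM2l.
Unshelve. all: by end_near.
Qed.

End critical_gw.

Theorem lemma1 (R : realType) (p : nat -> R) :
  is_prob_nat p ->
  offspring_mean p = 1%E ->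
  p 1%N != 1 ->
  (offspring_moment2 p < +oo)%E ->
  (forall x : R, 0 < x -> 0 < Fbar p x) ->
  (fun y : R => limf_esup (fun x : R => (Fbar p (x * y) / Fbar p x)%:E)
                          (pinfty_nbhs R)) @ +oo --> (0 : \bar R)%E ->
  (fun x : R => gw_max_tail p x / Num.sqrt (2 * Fbar p x / offspring_variance p))
    @ +oo --> (1 : R).
Proof.
move=> [p_ge0 p_sum1] p_mean1 p1_neq1 m2_fin Fbar_gt0 Fbar_regular.
apply: cvg_to1_of_bounds => d /[dup] d01 /andP[_ d_lt1]; near=> x.
apply: sqrt_ratio_bounds.
- exact: variance_gt0.
- by rewrite mulr_gt0// Fbar_gt0//; near: x; apply: nbhs_pinfty_gt; rewrite num_real.
- by have /andP[] := gw_max_tail_ge0_le1 p_ge0 p_sum1 p_mean1 p1_neq1 x.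
- exact: ltW.
- by near: x; exact: gw_max_tail_upper.
- by near: x; exact: (gw_max_tail_lower _ _ _ _ _ Fbar_gt0 Fbar_regular).
Unshelve. all: by end_near.
Qed.
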